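(* Let $k=\mathbb R$ or $\mathbb C$, let $(E,g)$ be a finite-dimensional inner product vector space over $k$, let $f\in\operatorname{End}_k(E)$, let $\mathcal H_f=\{H_1,\dots,H_n\}$ be $f$-invariant subspaces with $E=H_1\oplus\dots\oplus H_n$, and write $f_i=f|_{H_i}$. Then: (1) $\operatorname{Im} f=\operatorname{Im} f_1\oplus\dots\oplus\operatorname{Im} f_n$; (2) if $\mathcal H_f^\perp=[\operatorname{Im} f_1]_1^\perp\oplus\dots\oplus[\operatorname{Im} f_n]_n^\perp$, then $E=\operatorname{Im} f\oplus\mathcal H_f^\perp$; (3) $\operatorname{Ker} f=\operatorname{Ker} f_1\oplus\dots\oplus\operatorname{Ker} f_n$; (4) if $\widetilde{\mathcal H}_f^\perp=[\operatorname{Ker} f_1]_1^\perp\oplus\dots\oplus[\operatorname{Ker} f_n]_n^\perp$, then $E=\operatorname{Ker} f\oplus\widetilde{\mathcal H}_f^\perp$; (5) $f$ induces an isomorphism between $\widetilde{\mathcal H}_f^\perp$ and $\operatorname{Im} f$, and $f^+_{\mathcal H_f}(e)=(f|_{\widetilde{\mathcal H}_f^\perp})^{-1}(e)$ for $e\in\operatorname{Im} f$ and $f^+_{\mathcal H_f}(e)=0$ for $e\in\mathcal H_f^\perp$.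
   Context: An inner product is linear in the first argument, conjugate-symmetric and positive definite. For a subspace $W\subseteq H_i$, $[W]_i^\perp=\{v\in H_i:g(w,v)=0\ \forall w\in W\}$. For an endomorphism $h$ of a finite-dimensional inner product space $H$, its Moore-Penrose inverse $h^\dagger$ is the linear map equal to $(h|_{[\operatorname{Ker} h]^\perp})^{-1}$ on $\operatorname{Im} h$ and $0$ on $[\operatorname{Im} h]^\perp$ (orthogonal complements taken in $H$). $f^+_{\mathcal H_f}$ is the unique endomorphism of $E$ with $f^+_{\mathcal H_f}|_{H_i}=f_i^\dagger$ for each $i$, where $H_i$ carries the restricted inner product. *)

From HB Require Import structures.
From mathcomp Require Import all_boot all_order all_algebra.
From mathcomp Require Import reals complex.
Set Implicit Arguments. Unset Strict Implicit. Unset Printing Implicit Defensive.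
Import Order.TTheory GRing.Theory Num.Theory.
Local Open Scope ring_scope.


Definition is_inner_product (k : numFieldType) (cj : k -> k) (E : vectType k)
    (g : E -> E -> k) : Prop :=
  [/\ (forall (a : k) (x x' y : E), g (a *: x + x') y = a * g x y + g x' y),
      (forall x y : E, g y x = cj (g x y)) &
      (forall x : E, x != 0 -> 0 < g x x)].

Definition is_orth_in (k : numFieldType) (E : vectType k) (g : E -> E -> k)
    (Hs W O : {vspace E}) : Prop :=
  forall v : E, v \in O <-> (v \in Hs /\ forall w : E, w \in W -> g w v = 0).

(* The statement of Lemma 3.3 over the scalar field k with conjugation cj.
   f_i = f|_{H_i}; Im f_i = f @: H i; Ker f_i = lker f :&: H i.
   OI i = [Im f_i]_i^perp, OK i = [Ker f_i]_i^perp (complements in H_i),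
   fp = f^+_{H_f}: its restriction to H_i is the Moore-Penrose inverse of f_i,
   i.e. on Im f_i it is the inverse of f_i restricted to [Ker f_i]_i^perp,
   and it vanishes on [Im f_i]_i^perp. *)
Definition Lemma3p3 (k : numFieldType) (cj : k -> k) : Prop :=
  forall (E : vectType k) (g : E -> E -> k), is_inner_product cj g ->
  forall (f : 'End(E)) (n : nat) (H : 'I_n -> {vspace E}),
  (forall i, (f @: H i <= H i)%VS) ->
  directv (\sum_(i < n) H i) -> (\sum_(i < n) H i)%VS = fullv ->
  forall (OI OK : 'I_n -> {vspace E}),
  (forall i, is_orth_in g (H i) (f @: H i) (OI i)) ->
  (forall i, is_orth_in g (H i) (lker f :&: H i) (OK i)) ->
  forall fp : 'End(E),
  (forall i,
     (forall e, e \in (f @: H i)%VS -> fp e \in OK i /\ f (fp e) = e) /\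
     (forall e, e \in OI i -> fp e = 0)) ->
  let Hperp := (\sum_(i < n) OI i)%VS in
  let Htperp := (\sum_(i < n) OK i)%VS in
  [/\
      limg f = (\sum_(i < n) f @: H i)%VS /\ directv (\sum_(i < n) f @: H i),
      (limg f + Hperp)%VS = fullv /\ (limg f :&: Hperp)%VS = 0%VS,
      lker f = (\sum_(i < n) (lker f :&: H i))%VS
        /\ directv (\sum_(i < n) (lker f :&: H i)),
      (lker f + Htperp)%VS = fullv /\ (lker f :&: Htperp)%VS = 0%VS &
      [/\ (f @: Htperp)%VS = limg f,
          (lker f :&: Htperp)%VS = 0%VS,
          (forall e, e \in limg f -> fp e \in Htperp /\ f (fp e) = e) &
          (forall e, e \in Hperp -> fp e = 0)]].

From HB Require Import structures.
From mathcomp Require Import all_boot all_order all_algebra.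
From mathcomp Require Import reals complex.
From mathcomp Require Import zify.
Set Implicit Arguments. Unset Strict Implicit. Unset Printing Implicit Defensive.
Import Order.TTheory GRing.Theory Num.Theory.
Local Open Scope ring_scope.

(* Each part is the sum over [i] of the same statement inside [H_i]: the
   subspaces [Im f_i] and [Ker f_i] of [H_i] and their complements in [H_i]
   inherit independence from the [H_i], so the local splittings add up to
   global ones, and [f^+] is assembled linearly from the local pseudo-inverses.
   The inner product enters only to show that the orthogonal complement of [W]
   in [U >= W] is a complement: it meets [W] trivially by positivity, and it is
   large enough because it contains the kernel on [U] of [v |-> (g v b_j)_j]
   for a basis [b] of [W], a map of rank at most [dim W]. *)

Section OrthogonalComplement.
Variables (k : numFieldType) (cj : k -> k) (E : vectType k) (g : E -> E -> k).
Hypothesis g_linear : forall (a : k) (x x' y : E), g (a *: x + x') y = a * g x y + g x' y.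
Hypothesis g_conj_sym : forall x y : E, g y x = cj (g x y).
Hypothesis g_pos : forall x : E, x != 0 -> 0 < g x x.

Lemma inner0l (y : E) : g 0 y = 0.
Proof.
have := g_linear 1 0 0 y; rewrite scale1r addr0 mul1r => /esym/eqP.
by rewrite -subr_eq0 addrK => /eqP.
Qed.

Lemma inner_scalel (a : k) (x y : E) : g (a *: x) y = a * g x y.
Proof. by rewrite -[a *: x]addr0 g_linear inner0l addr0. Qed.

Lemma inner_suml (I : Type) (r : seq I) (F : I -> E) (y : E) :
  g (\sum_(i <- r) F i) y = \sum_(i <- r) g (F i) y.
Proof.
elim: r => [|a r IH]; first by rewrite !big_nil inner0l.
by rewrite !big_cons -IH -[F a]scale1r g_linear mul1r scale1r.
Qed.

Lemma conj0 : cj 0 = 0.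
Proof. by rewrite -(inner0l 0) -g_conj_sym. Qed.

Section InnerRow.
Variables (m : nat) (b : m.-tuple E).

Definition inner_row (v : E) : 'rV[k]_m := \row_j g v (tnth b j).

Fact inner_row_is_linear : linear inner_row.
Proof. by move=> a x y; apply/rowP => j; rewrite !mxE g_linear. Qed.

HB.instance Definition _ :=
  GRing.isLinear.Build k E 'rV[k]_m _ inner_row inner_row_is_linear.

Definition inner_rowf : 'Hom(E, 'rV[k]_m) := linfun inner_row.

End InnerRow.

Variables (U W O : {vspace E}).
Hypothesis O_orth : is_orth_in g U W O.

Lemma capv_orth_in0 : (W :&: O = 0)%VS.
Proof.
apply/eqP; rewrite -subv0; apply/subvP => v /memv_capP [vW /O_orth [_ vO]].
by rewrite memv0; apply/negPn/negP => /g_pos; rewrite vO // ltxx.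
Qed.

Lemma lker_inner_row_orth_in : (U :&: lker (inner_rowf (vbasis W)) <= O)%VS.
Proof.
apply/subvP => v /memv_capP [vU]; rewrite memv_ker lfunE => /eqP/rowP v_orth.
apply/O_orth; split=> // w wW.
rewrite (coord_vbasis wW) inner_suml big1 // => i _.
rewrite inner_scalel g_conj_sym.
by have := v_orth i; rewrite !mxE (tnth_nth 0) => ->; rewrite conj0 mulr0.
Qed.

Lemma addv_orth_in : (W <= U)%VS -> (W + O = U)%VS.
Proof.
move=> sWU; have sOU : (O <= U)%VS by apply/subvP => v /O_orth[].
have dim_ker := limg_ker_dim (inner_rowf (vbasis W)) U.
have dim_img : (\dim (inner_rowf (vbasis W) @: U) <= \dim W)%N.
  by rewrite (leq_trans (dimvS (subvf _))) // dimvf (dim_matrix k 1) mul1r.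
have dim_sum := dimv_sum_cap W O; rewrite capv_orth_in0 dimv0 addn0 in dim_sum.
have dim_O := dimvS lker_inner_row_orth_in.
apply/eqP; rewrite eqEdim subv_add sWU sOU /= dim_sum; lia.
Qed.

End OrthogonalComplement.

Section DirectSum.
Variables (k : fieldType) (E : vectType k) (n : nat).

Lemma sumv_lfun_rinv (f h : 'End(E)) (A B : 'I_n -> {vspace E}) :
    (forall i e, e \in A i -> h e \in B i /\ f (h e) = e) ->
  forall e, e \in (\sum_(i < n) A i)%VS -> h e \in (\sum_(i < n) B i)%VS /\ f (h e) = e.
Proof.
move=> h_rinv e /memv_sumP[es es_A ->]; rewrite !linear_sum; split.
  by apply: memv_sumr => i _; case: (h_rinv i _ (es_A i isT)).
by apply: eq_bigr => i _; case: (h_rinv i _ (es_A i isT)).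
Qed.

Variable H : 'I_n -> {vspace E}.
Hypothesis H_direct : directv (\sum_(i < n) H i).

Lemma directv_sum_subv (A : 'I_n -> {vspace E}) :
  (forall i, (A i <= H i)%VS) -> directv (\sum_(i < n) A i).
Proof.
move=> sAH; apply/directv_sum_independent => us us_A us0 i _.
by apply: (directv_sum_independent H_direct) => // j _; apply/(subvP (sAH j))/us_A.
Qed.

Lemma sumv_complements (A O : 'I_n -> {vspace E}) :
    (forall i, A i + O i = H i)%VS -> (forall i, A i :&: O i = 0)%VS ->
  ((\sum_(i < n) A i) + (\sum_(i < n) O i) = \sum_(i < n) H i)%VS /\
  ((\sum_(i < n) A i) :&: (\sum_(i < n) O i) = 0)%VS.
Proof.
move=> AO_H AO0; split; first by rewrite -big_split /=; apply: eq_bigr => i _; rewrite AO_H.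
have sAH i : (A i <= H i)%VS by rewrite -AO_H addvSl.
have sOH i : (O i <= H i)%VS by rewrite -AO_H addvSr.
apply/eqP; rewrite -subv0; apply/subvP => v /memv_capP[/memv_sumP[a a_A ->]].
case/memv_sumP=> o o_O.
move/eqP; rewrite (directv_sum_unique H_direct) => [/forallP a_o||]; last first.
- by move=> i _; apply/(subvP (sOH i))/o_O.
- by move=> i _; apply/(subvP (sAH i))/a_A.
rewrite memv0 big1 // => i _; apply/eqP; rewrite -memv0 -(AO0 i) memv_cap a_A //.
by rewrite (eqP (a_o i)) o_O.
Qed.

Variable f : 'End(E).
Hypothesis H_invariant : forall i, (f @: H i <= H i)%VS.

Lemma lker_cap_sumv :
  (lker f :&: \sum_(i < n) H i)%VS = (\sum_(i < n) (lker f :&: H i))%VS.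
Proof.
apply/eqP; rewrite eqEsubv; apply/andP; split; last first.
  by apply/subv_sumP => i _; rewrite capvS ?(sumv_sup i).
apply/subvP => v /memv_capP[v_ker /memv_sumP[vs vs_H v_def]].
have f_vs0 i : f (vs i) = 0.
  apply: (directv_sum_independent H_direct (fun j => f (vs j))) => // [j _|].
    exact/(subvP (H_invariant j))/memv_img/vs_H.
  by rewrite -linear_sum -v_def; apply/eqP; rewrite -memv_ker.
by rewrite v_def; apply: memv_sumr => i _; rewrite memv_cap memv_ker f_vs0 eqxx vs_H.
Qed.

End DirectSum.

Lemma sumv_orth_in_complements (k : numFieldType) (cj : k -> k) (E : vectType k)
    (g : E -> E -> k) (n : nat) (H A O : 'I_n -> {vspace E}) :
    is_inner_product cj g -> directv (\sum_(i < n) H i) ->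
    (forall i, A i <= H i)%VS -> (forall i, is_orth_in g (H i) (A i) (O i)) ->
  ((\sum_(i < n) A i) + (\sum_(i < n) O i) = \sum_(i < n) H i)%VS /\
  ((\sum_(i < n) A i) :&: (\sum_(i < n) O i) = 0)%VS.
Proof.
move=> [g_linear g_conj_sym g_pos] H_direct sAH O_orth.
apply: sumv_complements => // i.
  exact: (addv_orth_in g_linear g_conj_sym g_pos (O_orth i) (sAH i)).
exact: (capv_orth_in0 g_pos (O_orth i)).
Qed.

Lemma Lemma3p3_holds (k : numFieldType) (cj : k -> k) : Lemma3p3 cj.
Proof.
move=> E g g_inner f n H H_inv H_direct H_full OI OK OI_orth OK_orth fp fp_pinv Hperp Htperp.
have limg_sum : limg f = (\sum_(i < n) f @: H i)%VS by rewrite -H_full limg_sum.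
have lker_sum : lker f = (\sum_(i < n) (lker f :&: H i))%VS.
  by rewrite -(lker_cap_sumv H_direct H_inv) H_full capvf.
have sKH i : (lker f :&: H i <= H i)%VS by apply: capvSr.
have fp_rinv e : e \in limg f -> fp e \in Htperp /\ f (fp e) = e.
  by rewrite limg_sum; apply: sumv_lfun_rinv => i; apply: (fp_pinv i).1.
have fp_Hperp0 : (Hperp <= lker fp)%VS.
  by apply/subv_sumP => i _; apply/subvP => e /(fp_pinv i).2; rewrite memv_ker => ->.
split.
- by split => //; apply: directv_sum_subv H_direct _ H_inv.
- by rewrite limg_sum -H_full; apply: sumv_orth_in_complements g_inner H_direct H_inv OI_orth.
- by split => //; apply: directv_sum_subv H_direct _ sKH.
- by rewrite lker_sum -H_full; apply: sumv_orth_in_complements g_inner H_direct sKH OK_orth.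
split=> //; last by move=> e /(subvP fp_Hperp0); rewrite memv_ker => /eqP.
- apply/eqP; rewrite eqEsubv limgS ?subvf //=.
  by apply/subvP => e /fp_rinv[fp_e <-]; apply: memv_img.
- rewrite lker_sum.
  by have [_] := sumv_orth_in_complements g_inner H_direct sKH OK_orth.
Qed.

Theorem lemma3p3 (R : realType) :
  Lemma3p3 (fun x : R => x) /\ Lemma3p3 (fun z : R[i] => z^*).
Proof. by split; apply: Lemma3p3_holds. Qed.
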